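(* For every commutative ring $k$, the Zunino category $\mathcal{Z}_k$ has equalizers and coequalizers.
   Context: Let $k$ be a commutative ring. The Zunino category $\mathcal{Z}_k$ has as objects pairs $(X,M)$ with $X$ a set and $M=(M_x)_{x\in X}$ a family of $k$-modules; a morphism $(X,M)\to(Y,N)$ is a pair $(f,\varphi)$ with $f:X\to Y$ a function and $\varphi=(\varphi_x:M_x\to N_{f(x)})_{x\in X}$ a family of $k$-linear maps; composition is $(g,\psi)\circ(f,\varphi)=(g\circ f,(\psi_{f(x)}\circ\varphi_x)_x)$. *)

From HB Require Import structures.
From mathcomp Require Import all_boot all_algebra.
Set Implicit Arguments. Unset Strict Implicit. Unset Printing Implicit Defensive.
Import GRing.Theory.
Local Open Scope ring_scope.

(* The Zunino category Z_k over a commutative ring k (possibly the zero ring,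
   hence comPzRingType).  An object is a pair (X, M) of a set X (a Type) and a
   family M = (M_x)_{x in X} of k-modules. *)
Record zobj (k : comPzRingType) := ZObj {
  zset : Type;
  zmod : zset -> lmodType k }.
Arguments zset {k} z.
Arguments zmod {k} z x.

Definition zhom (k : comPzRingType) (A B : zobj k) : Type :=
  {f : zset A -> zset B & forall x : zset A, {linear zmod A x -> zmod B (f x)}}.

Definition zcomp (k : comPzRingType) (A B C : zobj k)
  (g : zhom B C) (f : zhom A B) : zhom A C :=
  existT _ (fun x => projT1 g (projT1 f x))
    (fun x => (projT2 g (projT1 f x) \o projT2 f x)%FUN :
       {linear zmod A x -> zmod C (projT1 g (projT1 f x))}).

Definition is_equalizer (k : comPzRingType) (A B E : zobj k)
  (f g : zhom A B) (e : zhom E A) : Prop :=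
  zcomp f e = zcomp g e /\
  forall (Z : zobj k) (z : zhom Z A), zcomp f z = zcomp g z ->
    exists! u : zhom Z E, zcomp e u = z.

Definition is_coequalizer (k : comPzRingType) (A B Q : zobj k)
  (f g : zhom A B) (q : zhom B Q) : Prop :=
  zcomp q f = zcomp q g /\
  forall (Z : zobj k) (z : zhom B Z), zcomp z f = zcomp z g ->
    exists! u : zhom Q Z, zcomp u q = z.

Definition has_equalizers (k : comPzRingType) : Prop :=
  forall (A B : zobj k) (f g : zhom A B),
    exists (E : zobj k) (e : zhom E A), is_equalizer f g e.

Definition has_coequalizers (k : comPzRingType) : Prop :=
  forall (A B : zobj k) (f g : zhom A B),
    exists (Q : zobj k) (q : zhom B Q), is_coequalizer f g q.

From HB Require Import structures.
From mathcomp Require Import all_boot all_algebra.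
From mathcomp Require Import boolp.
From Stdlib Require Import RelationClasses.
Set Implicit Arguments. Unset Strict Implicit. Unset Printing Implicit Defensive.
Import GRing.Theory.
Local Open Scope ring_scope.

(* Equalizers are computed fibrewise: the equalizer of (f, phi), (g, psi) :
   (X, M) -> (Y, N) lives over {x | f x = g x}, with fibre over x the kernel of
   phi_x - psi_x (phi_x transported along f x = g x).  Coequalizers glue the
   index set: Y is divided by the equivalence generated by f x ~ g x, and the
   fibre over a class c is the colimit of the N_y, y in c, along all the phi_x
   and psi_x.  It is realised as formal sums of elements of the N_y, two sums
   being identified when every cocone on that diagram sends them to the same
   vector.  The comparison morphisms are monic, resp. epic, whence uniqueness. *)

Section LinearMaps.
Variable k : comPzRingType.

Definition lin_of (U V : lmodType k) (f : U -> V) (fL : linear f) :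
    {linear U -> V} :=
  HB.pack_for {linear U -> V} f (GRing.isLinear.Build k U V *:%R f fL).

Lemma linear_ext (U V : lmodType k) (l1 l2 : {linear U -> V}) :
  l1 =1 l2 -> l1 = l2.
Proof.
move: l1 l2 => [f1 c1] [f2 c2] /= /funext E; subst f2.
move: c1 c2 => [[a1] [b1]] [[a2] [b2]].
by rewrite (Prop_irrelevance a1 a2) (Prop_irrelevance b1 b2).
Qed.

Definition cast_lin (I : Type) (F : I -> lmodType k) (i j : I) (e : i = j) :
    {linear F i -> F j} :=
  match e in _ = j return {linear F i -> F j} with
  | erefl => lin_of (f := idfun) (fun _ _ _ => erefl)
  end.

Variables (I : Type) (F : I -> lmodType k).

Lemma eq_cast_lin (i j : I) (e1 e2 : i = j) m :
  cast_lin F e1 m = cast_lin F e2 m.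
Proof. by rewrite (Prop_irrelevance e1 e2). Qed.

Lemma cast_lin_id (i : I) (e : i = i) m : cast_lin F e m = m.
Proof. by rewrite (eq_cast_lin e erefl). Qed.

Lemma cast_linK (i j l : I) (e1 : i = j) (e2 : j = l) m :
  cast_lin F e2 (cast_lin F e1 m) = cast_lin F (etrans e1 e2) m.
Proof. by case: l / e2. Qed.

End LinearMaps.

Section ZuninoMorphisms.
Variables (k : comPzRingType) (A B : zobj k).

Lemma zhomP (u v : zhom A B) :
  u = v <-> exists H : projT1 u =1 projT1 v,
    forall x m, cast_lin (zmod B) (H x) (projT2 u x m) = projT2 v x m.
Proof.
split=> [-> | ]; first by exists (fun x => erefl).
move: u v => [u1 u2] [v1 v2] /= [H Hm].
have E : u1 = v1 := funext H; subst v1.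
congr existT; apply: functional_extensionality_dep => x; apply: linear_ext => m.
by rewrite -Hm cast_lin_id.
Qed.

Lemma cast_lin_zhom (u : zhom A B) a1 a2 (e : a1 = a2) m :
  cast_lin (zmod B) (f_equal (projT1 u) e) (projT2 u a1 m)
  = projT2 u a2 (cast_lin (zmod A) e m).
Proof. by case: a2 / e. Qed.

End ZuninoMorphisms.

Section EqualizerSubmodule.
Variables (k : comPzRingType) (U V : lmodType k) (a b : {linear U -> V}).

Definition eqker : pred U := fun u => a u == b u.
Definition Eqker := {u : U | eqker u}.
HB.instance Definition _ := [isSub for (@proj1_sig U eqker : Eqker -> U)].
HB.instance Definition _ := [Choice of Eqker by <:].

Lemma eqker_closed : subsemimod_closed eqker.
Proof.
split; first split.
- by rewrite unfold_in /eqker /= !raddf0.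
- move=> u v; rewrite !unfold_in /eqker /= => /eqP au /eqP av.
  by apply/eqP; rewrite !raddfD; congr (_ + _).
- move=> c u; rewrite !unfold_in /eqker /= => /eqP au.
  by apply/eqP; rewrite !linearZ; congr (_ *: _).
Qed.
HB.instance Definition _ :=
  GRing.SubChoice_isSubLmodule.Build k U eqker Eqker eqker_closed.

End EqualizerSubmodule.

Section Equalizer.
Variables (k : comPzRingType) (A B : zobj k) (f g : zhom A B).

Definition equalizer_set := {x : zset A | projT1 f x = projT1 g x}.

Definition equalizer_fibre (p : equalizer_set) : lmodType k :=
  Eqker (cast_lin (zmod B) (proj2_sig p) \o projT2 f (sval p) : {linear _ -> _})
        (projT2 g (sval p)).

Definition equalizer_obj : zobj k := ZObj equalizer_fibre.

Definition equalizer_mor : zhom equalizer_obj A :=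
  existT _ (fun p : equalizer_set => sval p)
    (fun p => val : {linear equalizer_fibre p -> zmod A (sval p)}).

Lemma equalizer_mor_eq : zcomp f equalizer_mor = zcomp g equalizer_mor.
Proof. by apply/zhomP; exists (fun p => proj2_sig p) => p m; exact/eqP/(valP m). Qed.

Lemma val_cast_lin (p1 p2 : equalizer_set) (e : p1 = p2) (m : equalizer_fibre p1) :
  val (cast_lin equalizer_fibre e m) = cast_lin (zmod A) (f_equal sval e) (val m).
Proof. by case: p2 / e. Qed.

Lemma equalizer_mor_mono (Z : zobj k) (v1 v2 : zhom Z equalizer_obj) :
  zcomp equalizer_mor v1 = zcomp equalizer_mor v2 -> v1 = v2.
Proof.
case/zhomP=> [H Hm].
have H' : projT1 v1 =1 projT1 v2 by move=> w; apply: eq_sig_hprop (H w).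
apply/zhomP; exists H' => w m; apply: val_inj.
have /= <- := Hm w m.
by rewrite val_cast_lin; apply: eq_cast_lin.
Qed.

Lemma equalizer_factor_unique (Z : zobj k) (z : zhom Z A) :
  zcomp f z = zcomp g z -> exists! u : zhom Z equalizer_obj, zcomp equalizer_mor u = z.
Proof.
case/zhomP=> [H Hm].
pose uset w : equalizer_set := exist _ (projT1 z w) (H w).
pose ufib w m : equalizer_fibre (uset w) := exist _ (projT2 z w m) (introT eqP (Hm w m)).
have ufibL w : linear (ufib w) by move=> c x y; apply: val_inj; exact: linearP.
pose u : zhom Z equalizer_obj := existT _ uset (fun w => lin_of (ufibL w)).
have uK : zcomp equalizer_mor u = z by apply/zhomP; exists (fun w => erefl) => w m.
by exists u; split=> // u' u'K; apply: equalizer_mor_mono; rewrite uK u'K.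
Qed.

Lemma equalizer_mor_universal : is_equalizer f g equalizer_mor.
Proof. by split; [exact: equalizer_mor_eq | exact: equalizer_factor_unique]. Qed.

End Equalizer.

Section EquivalenceClasses.
Variables (T : Type) (R : T -> T -> Prop).
Context {R_equiv : Equivalence R}.

Definition eqclass := {P : T -> Prop | exists a, P = R a}.
Definition class_of a : eqclass := exist _ (R a) (ex_intro _ a erefl).

Lemma eq_class_of a b : class_of a = class_of b <-> R a b.
Proof.
split=> [/(f_equal sval) /= Eab | Rab]; first by rewrite Eab; reflexivity.
apply: eq_exist; apply/funext => c; apply/propext.
by split=> ?; [transitivity a; first symmetry | transitivity b].
Qed.

Lemma class_of_self a : sval (class_of a) a.
Proof. by rewrite /=; reflexivity. Qed.

Lemma class_of_surj (q : eqclass) : exists a, q = class_of a.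
Proof. by case: q => P [a Pa]; exists a; exact: eq_exist. Qed.

Definition class_repr (q : eqclass) : T := sval (cid (class_of_surj q)).

Lemma class_reprK q : class_of (class_repr q) = q.
Proof. by rewrite /class_repr; case: cid. Qed.

Lemma class_mem_rel (q : eqclass) a b : R a b -> sval q a -> sval q b.
Proof. by rewrite -(class_reprK q) /= => ab ra; transitivity a. Qed.

Lemma class_repr_of a : R (class_repr (class_of a)) a.
Proof. by apply/eq_class_of; rewrite class_reprK. Qed.

Lemma class_repr_mem (q : eqclass) a : sval q a -> R (class_repr q) a.
Proof. by rewrite -{1}(class_reprK q). Qed.

Lemma class_of_mem (q : eqclass) a : sval q a -> class_of a = q.
Proof.
by move=> /class_repr_mem qa; rewrite -[RHS]class_reprK; apply/eq_class_of; symmetry.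
Qed.

End EquivalenceClasses.
Arguments class_of {T} R a.
Arguments class_repr {T} R q.

(* [L] need not be a module: identifying elements that have equal images under
   all the [valid] maps, which are additive and homogeneous, makes it one. *)
Section ValidQuotient.
Variables (k : comPzRingType) (L : Type) (ladd : L -> L -> L) (lzero : L)
  (lscale : k -> L -> L) (valid : forall W : lmodType k, (L -> W) -> Prop).
Hypothesis validD : forall (W : lmodType k) (h : L -> W), valid h ->
  forall a b, h (ladd a b) = h a + h b.
Hypothesis valid0 : forall (W : lmodType k) (h : L -> W), valid h -> h lzero = 0.
Hypothesis validZ : forall (W : lmodType k) (h : L -> W), valid h ->
  forall c a, h (lscale c a) = c *: h a.

Definition vrel (a b : L) : Prop :=
  forall (W : lmodType k) (h : L -> W), valid h -> h a = h b.

#[global] Instance vrel_equiv : Equivalence vrel.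
Proof.
split=> [a W h _ | a b ab W h vh | a b c ab bc W h vh] //.
- by rewrite (ab W h vh).
- by rewrite (ab W h vh) (bc W h vh).
Qed.

Definition vquot_type := eqclass vrel.
Local Notation cls := (class_of vrel).
Local Notation repr := (class_repr vrel).

Lemma valid_repr_of (W : lmodType k) (h : L -> W) a : valid h -> h (repr (cls a)) = h a.
Proof. exact: (class_repr_of (R := vrel) a). Qed.

Definition vadd (p q : vquot_type) := cls (ladd (repr p) (repr q)).
Definition vscale c (q : vquot_type) := cls (lscale c (repr q)).

Lemma vaddE a b : vadd (cls a) (cls b) = cls (ladd a b).
Proof. by apply/eq_class_of => W h vh; rewrite !validD // !valid_repr_of. Qed.

Lemma vscaleE c a : vscale c (cls a) = cls (lscale c a).
Proof. by apply/eq_class_of => W h vh; rewrite !validZ // valid_repr_of. Qed.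

HB.instance Definition _ := gen_eqMixin vquot_type.
HB.instance Definition _ := gen_choiceMixin vquot_type.

Ltac elim_classes := repeat (let q := fresh "q" in intro q;
  let a := fresh "a" in have [a ->] := class_of_surj q; clear q).

Lemma vaddA : associative vadd.
Proof.
by elim_classes; rewrite !vaddE; apply/eq_class_of => W h vh; rewrite !validD // addrA.
Qed.

Lemma vaddC : commutative vadd.
Proof.
by elim_classes; rewrite !vaddE; apply/eq_class_of => W h vh; rewrite !validD // addrC.
Qed.

Lemma vadd0 : left_id (cls lzero) vadd.
Proof.
elim_classes; rewrite vaddE; apply/eq_class_of => W h vh.
by rewrite validD // valid0 // add0r.
Qed.

Lemma vaddN : left_inverse (cls lzero) (vscale (-1)) vadd.
Proof.
elim_classes; rewrite vscaleE vaddE; apply/eq_class_of => W h vh.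
by rewrite validD // validZ // valid0 // scaleN1r addNr.
Qed.
HB.instance Definition _ := GRing.isZmodule.Build vquot_type vaddA vaddC vadd0 vaddN.

Lemma vscaleA a b v : vscale a (vscale b v) = vscale (a * b) v.
Proof.
by elim_classes; rewrite !vscaleE; apply/eq_class_of => W h vh; rewrite !validZ // scalerA.
Qed.

Lemma vscale1 : left_id 1 vscale.
Proof.
by elim_classes; rewrite vscaleE; apply/eq_class_of => W h vh; rewrite validZ // scale1r.
Qed.

Lemma vscaleDr c x y : vscale c (vadd x y) = vadd (vscale c x) (vscale c y).
Proof.
move: x y; elim_classes; rewrite vaddE !vscaleE vaddE.
by apply/eq_class_of => W h vh; rewrite !(validZ, validD) // scalerDr.
Qed.

Lemma vscaleDl v a b : vscale (a + b) v = vadd (vscale a v) (vscale b v).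
Proof.
move: v; elim_classes; rewrite !vscaleE vaddE.
by apply/eq_class_of => W h vh; rewrite !(validZ, validD) // scalerDl.
Qed.
HB.instance Definition _ :=
  GRing.Zmodule_isLmodule.Build k vquot_type vscaleA vscale1 vscaleDr vscaleDl.
Definition vquot : lmodType k := vquot_type.

Lemma class_ofD a b : cls (ladd a b) = (cls a : vquot) + cls b.
Proof. by rewrite -vaddE. Qed.

Lemma class_ofZ c a : cls (lscale c a) = c *: (cls a : vquot).
Proof. by rewrite -vscaleE. Qed.

Section Lift.
Variables (W : lmodType k) (h : L -> W) (vh : valid h).

Definition vlift (q : vquot) : W := h (repr q).

Lemma vliftE a : vlift (cls a) = h a.
Proof. exact: valid_repr_of. Qed.

Lemma vlift_linear : linear vlift.
Proof.
by move=> c; elim_classes; rewrite -class_ofZ -class_ofD !vliftE validD // validZ.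
Qed.

End Lift.
End ValidQuotient.

Section Coequalizer.
Variables (k : comPzRingType) (A B : zobj k) (f g : zhom A B).
Local Notation Y := (zset B).
Local Notation N := (zmod B).

(* The equivalence relation generated by [f x ~ g x], defined impredicatively. *)
Definition coequalizer_rel (y1 y2 : Y) : Prop :=
  forall P : Y -> Prop, (forall x, P (projT1 f x) <-> P (projT1 g x)) ->
    (P y1 <-> P y2).

#[global] Instance coequalizer_rel_equiv : Equivalence coequalizer_rel.
Proof.
split=> [y P _ | y1 y2 r P HP | y1 y2 y3 r1 r2 P HP] //.
- by symmetry; exact: r.
- by rewrite (r1 P HP); exact: r2.
Qed.

Lemma coequalizer_rel_fg x : coequalizer_rel (projT1 f x) (projT1 g x).
Proof. by move=> P. Qed.

Definition coequalizer_set := eqclass coequalizer_rel.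
Local Notation ycls := (class_of coequalizer_rel).

Definition entry (c : coequalizer_set) := {p : {y : Y | sval c y} & N (sval p)}.

Definition entry_of c y (yc : sval c y) (n : N y) : entry c :=
  existT (fun p : {y : Y | sval c y} => N (sval p)) (exist _ y yc) n.

Definition fsum (c : coequalizer_set) := seq (entry c).

Definition fsum_eval c (W : lmodType k) (h : forall y, N y -> W) (l : fsum c) : W :=
  \sum_(e <- l) h (sval (projT1 e)) (projT2 e).

Definition fsum_scale c (a : k) (l : fsum c) : fsum c :=
  map (fun e : entry c => existT _ (projT1 e) (a *: projT2 e)) l.

Definition cocone (W : lmodType k) (h : forall y, {linear N y -> W}) :=
  forall x m, h (projT1 f x) (projT2 f x m) = h (projT1 g x) (projT2 g x m).

Definition cocone_eval c (W : lmodType k) (h : fsum c -> W) : Prop :=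
  exists hh : forall y, {linear N y -> W}, cocone hh /\ h =1 fsum_eval hh.

Lemma cocone_evalD c (W : lmodType k) (h : fsum c -> W) :
  cocone_eval h -> forall a b, h (a ++ b) = h a + h b.
Proof. by case=> hh [_ E] a b; rewrite !E /fsum_eval big_cat. Qed.

Lemma cocone_eval0 c (W : lmodType k) (h : fsum c -> W) :
  cocone_eval h -> h [::] = 0.
Proof. by case=> hh [_ E]; rewrite E /fsum_eval big_nil. Qed.

Lemma cocone_evalZ c (W : lmodType k) (h : fsum c -> W) :
  cocone_eval h -> forall a l, h (fsum_scale a l) = a *: h l.
Proof.
case=> hh [_ E] a l; rewrite !E /fsum_eval /fsum_scale big_map scaler_sumr.
by apply: eq_bigr => e _; rewrite linearZ.
Qed.

Definition coequalizer_fibre (c : coequalizer_set) : lmodType k :=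
  vquot (@cocone_evalD c) (@cocone_eval0 c) (@cocone_evalZ c).

Definition coequalizer_obj : zobj k := ZObj coequalizer_fibre.

Local Notation cl c l := (class_of (vrel (@cocone_eval c)) l : coequalizer_fibre c).

Lemma coequalizer_mor_linear y :
  linear (fun n : N y => cl (ycls y) [:: entry_of (class_of_self y) n]).
Proof.
move=> a n1 n2; rewrite -class_ofZ -class_ofD; apply/eq_class_of => W h [hh [_ E]].
by rewrite !E /fsum_eval !big_cons !big_nil /= !addr0 linearD.
Qed.

Definition coequalizer_mor : zhom B coequalizer_obj :=
  existT _ (fun y => ycls y) (fun y => lin_of (@coequalizer_mor_linear y)).

Lemma cast_lin_fsum c1 c2 (e : c1 = c2) (l1 : fsum c1) (l2 : fsum c2) :
  (forall (W : lmodType k) (hh : forall y, {linear N y -> W}), cocone hh ->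
     fsum_eval hh l1 = fsum_eval hh l2) ->
  cast_lin coequalizer_fibre e (cl c1 l1) = cl c2 l2.
Proof.
case: c2 / e l2 => l2 Hl; rewrite cast_lin_id; apply/eq_class_of => W h [hh [cp E]].
by rewrite !E; exact: Hl.
Qed.

Lemma coequalizer_mor_eq : zcomp coequalizer_mor f = zcomp coequalizer_mor g.
Proof.
apply/zhomP; exists (fun x => proj2 (eq_class_of _ _) (coequalizer_rel_fg x)) => x m /=.
by apply: cast_lin_fsum => W hh cp; rewrite /fsum_eval !big_cons !big_nil /= !addr0.
Qed.

Lemma class_of_fsum c (l : fsum c) : cl c l = \sum_(e <- l) cl c [:: e].
Proof.
elim: l => [|e l IH]; first by rewrite big_nil.
by rewrite big_cons -IH -class_ofD.
Qed.

Lemma class_of_entry c y (yc : sval c y) (n : N y) :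
  cl c [:: entry_of yc n]
  = cast_lin coequalizer_fibre (class_of_mem yc) (projT2 coequalizer_mor y n).
Proof.
by symmetry; apply: cast_lin_fsum => W hh _; rewrite /fsum_eval !big_cons !big_nil.
Qed.

Lemma coequalizer_fibre_ext c (W : lmodType k) (a b : {linear coequalizer_fibre c -> W}) :
  (forall y (yc : sval c y) n,
     a (cl c [:: entry_of yc n]) = b (cl c [:: entry_of yc n])) ->
  a =1 b.
Proof.
move=> Hab m; have [l ->] := class_of_surj m.
rewrite class_of_fsum !raddf_sum; apply: eq_bigr => -[[y yc] n] _; exact: Hab.
Qed.

Lemma coequalizer_mor_epi (Z : zobj k) (v1 v2 : zhom coequalizer_obj Z) :
  zcomp v1 coequalizer_mor = zcomp v2 coequalizer_mor -> v1 = v2.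
Proof.
case/zhomP=> [H Hm].
have H' : projT1 v1 =1 projT1 v2 by move=> c; have [y ->] := class_of_surj c; exact: H.
apply/zhomP; exists H' => c.
apply: (coequalizer_fibre_ext
  (a := cast_lin (zmod Z) (H' c) \o projT2 v1 c : {linear _ -> _})) => y yc n /=.
rewrite class_of_entry -(cast_lin_zhom v1 (class_of_mem yc)).
rewrite -(cast_lin_zhom v2 (class_of_mem yc)).
have /= <- := Hm y n.
by rewrite !cast_linK; apply: eq_cast_lin.
Qed.

Section Lift.
Variables (Z : zobj k) (z : zhom B Z).
Hypothesis zfg : zcomp z f = zcomp z g.

Lemma coequalizer_rel_zhom y1 y2 : coequalizer_rel y1 y2 -> projT1 z y1 = projT1 z y2.
Proof.
case/zhomP: zfg => zfg1 _ r.
have inv x : projT1 z y1 = projT1 z (projT1 f x) <-> projT1 z y1 = projT1 z (projT1 g x).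
  by have /= -> := zfg1 x.
exact: ((r (fun y => projT1 z y1 = projT1 z y) inv).1 erefl).
Qed.

Definition lift_idx (c : coequalizer_set) := projT1 z (class_repr coequalizer_rel c).

Lemma lift_idx_mem c y : sval c y -> projT1 z y = lift_idx c.
Proof. by move=> yc; symmetry; apply: coequalizer_rel_zhom; exact: class_repr_mem yc. Qed.

Definition lift_cocone c y : {linear N y -> zmod Z (lift_idx c)} :=
  match pselect (sval c y) with
  | left yc => cast_lin (zmod Z) (lift_idx_mem yc) \o projT2 z y : {linear _ -> _}
  | right _ => \0
  end.

Lemma lift_cocone_in c y (yc : sval c y) n :
  lift_cocone c y n = cast_lin (zmod Z) (lift_idx_mem yc) (projT2 z y n).
Proof.
by rewrite /lift_cocone; case: pselect => [yc'|/(_ yc) []] /=; apply: eq_cast_lin.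
Qed.

Lemma lift_cocone_out c y (yc : ~ sval c y) n : lift_cocone c y n = 0.
Proof. by rewrite /lift_cocone; case: pselect. Qed.

Lemma lift_coconeP c : cocone (lift_cocone c).
Proof.
case/zhomP: zfg => zfg1 zfg2 x m.
have [cf | ncf] := pselect (sval c (projT1 f x)).
- have cg : sval c (projT1 g x) by apply: class_mem_rel cf; exact: coequalizer_rel_fg.
  rewrite (lift_cocone_in cf) (lift_cocone_in cg); have /= <- := zfg2 x m.
  by rewrite cast_linK; apply: eq_cast_lin.
- have ncg : ~ sval c (projT1 g x).
    move=> cg; apply: ncf; apply: class_mem_rel cg.
    by symmetry; exact: coequalizer_rel_fg.
  by rewrite (lift_cocone_out ncf) (lift_cocone_out ncg).
Qed.

Lemma lift_cocone_eval c : cocone_eval (fsum_eval (c := c) (lift_cocone c)).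
Proof. by exists (lift_cocone c); split=> //; exact: lift_coconeP. Qed.

Definition coequalizer_lift : zhom coequalizer_obj Z :=
  existT _ lift_idx (fun c => lin_of (vlift_linear (lift_cocone_eval c))).

Lemma coequalizer_liftK : zcomp coequalizer_lift coequalizer_mor = z.
Proof.
apply/zhomP; exists (fun y => esym (lift_idx_mem (class_of_self y))) => y n /=.
rewrite vliftE; last exact: lift_cocone_eval.
rewrite /fsum_eval big_cons big_nil addr0 /= (lift_cocone_in (class_of_self y)).
by rewrite cast_linK cast_lin_id.
Qed.

End Lift.

Lemma coequalizer_mor_universal : is_coequalizer f g coequalizer_mor.
Proof.
split=> [|Z z zfg]; first exact: coequalizer_mor_eq.
exists (coequalizer_lift zfg); split=> [|u uK]; first exact: coequalizer_liftK.
by apply: coequalizer_mor_epi; rewrite coequalizer_liftK uK.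
Qed.

End Coequalizer.

Theorem proposition2p11 (k : comPzRingType) :
  has_equalizers k /\ has_coequalizers k.
Proof.
split=> A B f g.
- by exists (equalizer_obj f g), (equalizer_mor f g); exact: equalizer_mor_universal.
- exists (coequalizer_obj f g), (coequalizer_mor f g).
  exact: coequalizer_mor_universal.
Qed.
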